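(* Let $\mu$ be an $n$-dimensional AD regular measure on $\mathbb R^d$ with $\operatorname{diam}(\operatorname{supp}\mu)=\infty$ and $\mathcal D$ a dyadic lattice of $\mu$-cubes. Let $\epsilon_0>0$ and let $\delta_0>0$, $m_0,k_0\in\mathbb N$ be such that for all $i\in\mathbb Z$ and all $Q\in\mathcal D_i$ with $\beta_{1,\mu}(Q)>\epsilon_0$ there exist $k\in\mathbb Z$ with $|k|\le k_0$ and $P\in\mathcal D_{i+k+m_0}$, $P\subset4Q$, with $|S_{i+k}\mu(x)|\ge\delta_0$ for all $x\in P$. Set $\mathcal B=\{Q\in\mathcal D:\beta_{1,\mu}(Q)>\epsilon_0\}$ and $\widetilde{\mathcal B}=\bigcup_{k\in\mathbb Z}\{Q\in\mathcal D_{k+m_0}:|S_k\mu(x)|\ge\delta_0\ \forall x\in Q\}$. If for some $C_1>0$, $\sum_{Q\in\widetilde{\mathcal B}:Q\subset R}\mu(Q)\le C_1\mu(R)$ for all $R\in\mathcal D$, then there is $C_2>0$ such that $\sum_{Q\in\mathcal B:Q\subset R}\mu(Q)\le C_2\mu(R)$ for all $R\in\mathcal D$.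
   Context: $\mu$ is $n$-dimensional AD regular if $C_\mu^{-1}r^n\le\mu(B(x,r))\le C_\mu r^n$ for $x\in\operatorname{supp}\mu$, $r>0$. A dyadic lattice of $\mu$-cubes is a collection $\mathcal D=\bigcup_{j\in\mathbb Z}\mathcal D_j$ of Borel subsets of $\operatorname{supp}\mu$ such that: each $\mathcal D_j$ partitions $\operatorname{supp}\mu$; if $Q\in\mathcal D_j$, $Q'\in\mathcal D_k$, $k\le j$, then $Q\subset Q'$ or $Q\cap Q'=\emptyset$; for $Q\in\mathcal D_j$, $2^{-j}\lesssim\operatorname{diam}Q\le2^{-j}$ and $\mu(Q)\approx2^{-jn}$; plus the small boundaries condition. For $Q\in\mathcal D_j$, $\ell(Q)=2^{-j}$ and $aQ=\{x\in\operatorname{supp}\mu:\operatorname{dist}(x,Q)\le(a-1)\ell(Q)\}$. $\beta_{1,\mu}(Q)=\inf_L\ell(Q)^{-n}\int_{2Q}\operatorname{dist}(y,L)/\ell(Q)\,d\mu(y)$, infimum over $n$-planes $L$. Let $K(x)=x/|x|^{n+1}$, fix a nondecreasing $C^2$ $\varphi_{\mathbb R}:[0,\infty)\to[0,\infty)$ with $\chi_{[4,\infty)}\le\varphi_{\mathbb R}\le\chi_{[1/4,\infty)}$ and $\chi_{[1/3,3]}\le C|\varphi_{\mathbb R}'|$, $\varphi_\epsilon(x)=\varphi_{\mathbb R}(|x|^2/\epsilon^2)$, and $S_m\mu(x)=\int(\varphi_{2^{-m-1}}(x-y)-\varphi_{2^{-m}}(x-y))K(x-y)\,d\mu(y)$.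 *)

From HB Require Import structures.
From mathcomp Require Import all_boot all_order all_algebra.
From mathcomp Require Import all_classical all_reals all_analysis.
Set Implicit Arguments. Unset Strict Implicit. Unset Printing Implicit Defensive.
Import Order.TTheory GRing.Theory Num.Theory.
Import numFieldNormedType.Exports.
Local Open Scope classical_set_scope.
Local Open Scope ring_scope.

(* R^d is represented by row vectors
   'rV[R]_d, with the EUCLIDEAN norm defined below (the library norm on
   matrices is the max-norm). *)

Section Defs.
Variables (R : realType) (d : nat).

Definition Rd : Type := g_sigma_algebraType (@open ('rV[R]_d)).

Definition enorm (x : 'rV[R]_d) : R := Num.sqrt (\sum_(i < d) x ord0 i ^+ 2).

Definition eball (x : Rd) (r : R) : set Rd := [set y | enorm (y - x) < r].

Definition edist (x : Rd) (A : set Rd) : R := inf [set enorm (x - y) | y in A].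
Definition ediam (A : set Rd) : R :=
  sup [set enorm (x - y) | x in A & y in A].
Definition ebounded (A : set Rd) : Prop :=
  exists M : R, forall x y, A x -> A y -> enorm (x - y) <= M.

Variable mu : {measure set Rd -> \bar R}.

Definition supp : set Rd := [set x | forall r : R, 0 < r -> (0 < mu (eball x r))%E].

Definition AD_regular (n : nat) : Prop :=
  exists C : R, 0 < C /\ forall x r, supp x -> 0 < r ->
    ((C^-1 * r ^+ n)%:E <= mu (eball x r) /\ mu (eball x r) <= (C * r ^+ n)%:E)%E.

Definition side (j : int) : R := (2%:R : R) ^ (- j).

(* A dyadic lattice of mu-cubes: Dl j is the generation D_j.
   Cubes are understood as pairs (generation, set). *)
Definition dyadic_lattice (n : nat) (Dl : int -> set (set Rd)) : Prop :=
  (forall j Q, Dl j Q -> measurable Q /\ Q `<=` supp /\ Q !=set0) /\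
  (forall j x, supp x -> exists Q, Dl j Q /\ Q x) /\
  (forall j Q Q', Dl j Q -> Dl j Q' -> Q <> Q' -> Q `&` Q' = set0) /\
  (forall j k Q Q', (k <= j)%R -> Dl j Q -> Dl k Q' -> Q `<=` Q' \/ Q `&` Q' = set0) /\
  (exists C : R, 0 < C /\ forall j Q, Dl j Q ->
      C^-1 * side j <= ediam Q /\ ediam Q <= side j /\
      ((C^-1 * side j ^+ n)%:E <= mu Q /\ mu Q <= (C * side j ^+ n)%:E)%E) /\
  (exists C : R, 0 < C /\ forall j Q (lam : R), Dl j Q -> 0 < lam ->
      (mu [set x | Q x /\ (edist x (supp `\` Q) <= lam * side j)%R] +
       mu [set x | supp x /\ ~ Q x /\ (edist x Q <= 3 * side j)%R /\
                   (edist x Q <= lam * side j)%R]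
       <= (C * powR lam C^-1 * side j ^+ n)%:E)%E).

Definition dil (a : R) (j : int) (Q : set Rd) : set Rd :=
  [set x | supp x /\ edist x Q <= (a - 1) * side j].

Definition nplane (n : nat) (L : set Rd) : Prop :=
  exists (a : 'rV[R]_d) (A : 'M[R]_(n, d)),
    \rank A = n /\ L = [set (a + u *m A : Rd) | u in [set: 'rV[R]_n]].

Definition beta1 (n : nat) (j : int) (Q : set Rd) : \bar R :=
  ereal_inf [set (\int[mu]_(y in dil 2 j Q)
                   ((side j ^+ n)^-1 * (edist y L / side j))%:E)%E
            | L in nplane n].

Definition admissible_phi (phi : R -> R) : Prop :=
  (forall x, 0 < x -> derivable phi x 1) /\
  (forall x, 0 < x -> derivable (derive1 phi) x 1) /\
  (forall x, 0 < x -> {for x, continuous (derive1n 2 phi)}) /\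
  (forall x y, 0 <= x -> x <= y -> phi x <= phi y) /\
  (forall x, 0 <= x -> 0 <= phi x) /\
  (forall x, 4 <= x -> 1 <= phi x) /\
  (forall x, 0 <= x -> phi x <= (if 4^-1 <= x then 1 else 0)) /\
  (exists C : R, forall x, 3^-1 <= x <= 3 -> 1 <= C * `|(derive1 phi) x|).

Definition phi_eps (phi : R -> R) (eps : R) (x : 'rV[R]_d) : R :=
  phi (enorm x ^+ 2 / eps ^+ 2).

Definition Sm (n : nat) (phi : R -> R) (m : int) (x : Rd) : 'rV[R]_d :=
  \row_(i < d) Rintegral mu setT (fun y : Rd =>
     (phi_eps phi (side (m + 1)) (x - y) - phi_eps phi (side m) (x - y))
       * ((x - y) ord0 i / enorm (x - y) ^+ n.+1)).

End Defs.

From Pilot Require Import Defs.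
From HB Require Import structures.
From mathcomp Require Import all_boot all_order all_algebra.
From mathcomp Require Import all_classical all_reals all_analysis.
From mathcomp Require Import ring lra zify.
Set Implicit Arguments.
Unset Strict Implicit.
Unset Printing Implicit Defensive.
Import Order.TTheory GRing.Theory Num.Theory.
Import numFieldNormedType.Exports.
Local Open Scope classical_set_scope.
Local Open Scope ring_scope.

(* Each bad cube Q of generation i has, by hypothesis, a shadow: a cube P of
   the family B~ of generation i + m0 + k, |k| <= k0, lying in 4Q.  The masses of
   Q and P are comparable, and by the upper AD bound only boundedly many bad
   cubes share a shadow.  The shadows of the bad cubes contained in a cube R
   lie in boundedly many cubes of generation gen(R) - O(1), each of which
   carries B~-mass at most C1 times its own mass, whence the packing bound for B. *)

Section fsbig_fibers.
Variables (T : Type) (idx : T) (op : Monoid.com_law idx).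

Lemma fsbig_fibers (I J : choiceType) (X : set I) (Y : set J) (h : I -> J)
    (F : I -> T) :
  finite_set X -> finite_set Y -> (forall a, X a -> Y (h a)) ->
  \big[op/idx]_(a \in X) F a =
  \big[op/idx]_(b \in Y) \big[op/idx]_(a \in X `&` [set a | h a = b]) F a.
Proof.
move=> finX finY XY.
under [RHS]eq_fsbigr do rewrite fsbig_mkcondr.
rewrite exchange_fsbig //; apply: eq_fsbigr => a /[!inE] Xa.
rewrite (fsbigD1 (h a)) //=; last exact: XY.
rewrite ifT ?inE // fsbig1 ?Monoid.mulm1 // => b [_ /= hab].
by rewrite ifF //; apply/negbTE; rewrite notin_setE /= => e; apply: hab.
Qed.

End fsbig_fibers.

Lemma fsume_fiber_le (R : realType) (I J : choiceType) (X : set I) (h : I -> J)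
    (f : J -> \bar R) (M : R) :
  finite_set X -> (forall b, (0 <= f b)%E) ->
  (forall b, \sum_(a \in X `&` [set a | h a = b]) (1 : R) <= M) ->
  (\sum_(a \in X) f (h a) <= M%:E * \sum_(b \in h @` X) f b)%E.
Proof.
move=> finX f0 HM.
rewrite (@fsbig_fibers _ _ _ _ _ _ (h @` X) h _ finX (finite_image _ finX));
  last by move=> a Xa; exists a.
rewrite ge0_mule_fsumr //; apply: lee_fsum; first exact: finite_image.
move=> b _; have finXb : finite_set (X `&` [set a | h a = b]).
  exact: sub_finite_set (@subIsetl _ _ _) finX.
rewrite (eq_fsbigr (fun=> (f b * 1%:E)%E)); last first.
  by move=> a /[!inE] -[_ /= ->]; rewrite mule1.
rewrite -ge0_mule_fsumr // fsumEFin // muleC.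
by apply: lee_wpmul2r => //; rewrite lee_fin.
Qed.

Section euclidean.
Variables (R : realType) (d : nat).
Local Notation enorm := (@enorm R d).

Lemma enormN x : enorm (- x) = enorm x.
Proof. by congr Num.sqrt; apply: eq_bigr => i _; rewrite mxE sqrrN. Qed.

Lemma enormB x y : enorm (x - y) = enorm (y - x).
Proof. by rewrite -enormN opprB. Qed.

(* The constant 2 spares us Cauchy-Schwarz and is harmless in all estimates. *)
Lemma enormD_le x y : enorm (x + y) <= 2 * (enorm x + enorm y).
Proof.
rewrite /Defs.enorm.
set A := \sum_(i < d) x ord0 i ^+ 2; set B := \sum_(i < d) y ord0 i ^+ 2.
have A0 : 0 <= A by apply: sumr_ge0 => i _; exact: sqr_ge0.
have B0 : 0 <= B by apply: sumr_ge0 => i _; exact: sqr_ge0.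
have sum_le : \sum_(i < d) (x + y) ord0 i ^+ 2 <= 2 * (A + B).
  rewrite /A /B -big_split /= mulr_sumr; apply: ler_sum => i _; rewrite mxE.
  rewrite -subr_ge0 (_ : _ - _ = (x ord0 i - y ord0 i) ^+ 2); [exact: sqr_ge0|ring].
have sA := sqrtr_ge0 A; have sB := sqrtr_ge0 B.
have eA := sqr_sqrtr A0; have eB := sqr_sqrtr B0.
apply: le_trans (ler_wsqrtr sum_le) _.
rewrite -[leRHS]ger0_norm; last by nra.
by rewrite -sqrtr_sqr; apply: ler_wsqrtr; nra.
Qed.

Lemma enorm_split x y z : enorm (x - z) <= 2 * (enorm (x - y) + enorm (y - z)).
Proof. by rewrite -(subrKA y); exact: enormD_le. Qed.

Lemma measurable_eball (x : Rd R d) r : measurable (eball x r).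
Proof.
apply: sub_sigma_algebra; rewrite /eball.
have -> : [set y : Rd R d | enorm (y - x) < r] =
  (fun y : 'rV[R]_d => enorm (y - x)) @^-1` [set t | t < r] by [].
apply: open_comp; last exact: open_lt.
move=> y _; apply: (@continuous_comp _ _ _
  (fun z : 'rV[R]_d => \sum_(i < d) (z - x) ord0 i ^+ 2) (@Num.sqrt R)); last first.
  exact: sqrt_continuous.
apply: continuous_big => [|i _ z]; first exact: add_continuous.
apply: (@continuous_comp _ _ _ (fun z : 'rV[R]_d => (z - x) ord0 i)
  (fun t : R => t ^+ 2)); last first.
  exact: exprn_continuous.
have -> : (fun t : 'rV[R]_d => (t - x) ord0 i) = (fun t => t ord0 i - x ord0 i).
  by apply/funext => t; rewrite !mxE.
by apply: continuousB; [exact: coord_continuous|exact: cst_continuous].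
Qed.

Lemma edist_lt (x : Rd R d) (Q : set (Rd R d)) (c c' : R) :
  Q !=set0 -> Defs.edist x Q <= c -> c < c' -> exists2 y, Q y & enorm (x - y) < c'.
Proof.
move=> [q Qq] hle hlt.
have ne : [set enorm (x - y) | y in Q] !=set0 by exists (enorm (x - q)), q.
by have [_ [y Qy <-] ?] := inf_lt ne (le_lt_trans hle hlt); exists y.
Qed.

End euclidean.

Section side.
Variable R : realType.
Local Notation side := (side R).

Lemma side_gt0 (j : int) : 0 < side j.
Proof. exact: exprz_gt0. Qed.

Lemma sideD (i k : int) : side (i + k) = side i * side k.
Proof. by rewrite /side opprD expfzDr // pnatr_eq0. Qed.

Lemma side_nat (m : nat) : side m = ((2 : R) ^+ m)^-1.
Proof. by rewrite /side -exprnN. Qed.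

Lemma side_Nnat (m : nat) : side (- (m%:Z)) = (2 : R) ^+ m.
Proof. by rewrite /side opprK. Qed.

Lemma side_le (i i' : int) : i <= i' -> side i' <= side i.
Proof.
move=> lei; rewrite -(subrK i i') addrC sideD.
have : 0 <= i' - i by rewrite subr_ge0.
case: (i' - i) => // m _; rewrite side_nat.
apply: ler_piMr; first exact: ltW (side_gt0 _).
by rewrite invf_le1 ?exprn_ege1 ?exprn_gt0 ?ler1n.
Qed.

Lemma side_lt (i i' : int) : i < i' -> side i' < side i.
Proof.
move=> lti; rewrite -(subrK i i') addrC sideD.
have : 0 < i' - i by rewrite subr_gt0.
case: (i' - i) => // -[|m] // _; rewrite side_nat gtr_pMr ?side_gt0 //.
by rewrite invf_lt1 ?exprn_gt0 // exprn_egt1 // ltr1n.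
Qed.

End side.

Section dyadic_lattice.
Variables (R : realType) (d n : nat) (mu : {measure set (Rd R d) -> \bar R})
  (Dl : int -> set (set (Rd R d))).
Hypothesis L : dyadic_lattice mu n Dl.
Local Notation enorm := (@enorm R d).
Local Notation side := (side R).

Lemma cube_diam_le j Q x y : Dl j Q -> Q x -> Q y -> enorm (x - y) <= side j.
Proof.
move: L => [_ [_ [_ [_ [[C [C0 HC]] _]]]]] DQ Qx Qy.
have [diam_ge [diam_le _]] := HC j Q DQ.
set E := [set enorm (x - y) | x in Q & y in Q].
have [ubE|nubE] := pselect (has_ubound E).
  apply: le_trans diam_le; rewrite /ediam -/E.
  by apply: (ub_le_sup ubE); exists x => //; exists y.
move: diam_ge; rewrite /ediam -/E sup_out; last by case.
by rewrite leNgt mulr_gt0 ?invr_gt0 ?side_gt0.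
Qed.

Lemma cube_ancestor j j' Q : j' <= j -> Dl j Q -> exists2 Q', Dl j' Q' & Q `<=` Q'.
Proof.
move=> le_j'j DQ; have [_ [Qsupp [x Qx]]] := L.1 j Q DQ.
have [Q' [DQ' Q'x]] := L.2.1 j' x (Qsupp x Qx).
exists Q' => //; have [//|QQ'0] := L.2.2.2.1 _ _ _ _ le_j'j DQ DQ'.
by have : (Q `&` Q') x by []; rewrite QQ'0.
Qed.

Variable C : R.
Hypothesis cube_diam_ge : forall j Q, Dl j Q -> C^-1 * side j <= ediam Q.

Lemma cube_side_le_sub i j Q Q' : Dl i Q -> Dl j Q' -> Q `<=` Q' ->
  C^-1 * side i <= side j.
Proof.
move=> DQ DQ' QQ'; apply: le_trans (cube_diam_ge DQ) _.
have [_ [_ [q Qq]]] := L.1 i Q DQ.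
apply: ge_sup; first by exists (enorm (q - q)), q => //; exists q.
by move=> _ [x Qx [y Qy <-]]; exact: (cube_diam_le DQ' (QQ' _ Qx) (QQ' _ Qy)).
Qed.

Variable A : R.
Hypothesis C_gt0 : 0 < C.
Hypothesis cube_mass_ge : forall j Q, Dl j Q -> ((C^-1 * side j ^+ n)%:E <= mu Q)%E.
Hypothesis ball_mass_le : forall x r, supp mu x -> 0 < r ->
  (mu (eball x r) <= (A * r ^+ n)%:E)%E.

(* The cubes of F are disjoint, each of mass at least [C^-1 side(i)^n], and
   they all lie in the ball of radius [(2 rho + 3) side(i)] around [x0]. *)
Lemma count_cubes_near i (x0 : Rd R d) (rho : R) (F : set (int * set (Rd R d))) :
  finite_set F -> supp mu x0 -> 0 <= rho ->
  (forall p, F p -> p.1 = i /\ Dl i p.2 /\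
     exists2 q, p.2 q & enorm (q - x0) <= rho * side i) ->
  \sum_(p \in F) (1 : R) <= C * A * (2 * rho + 3) ^+ n.
Proof.
move=> finF x0supp rho_ge0 HF; set s := side i.
have s_gt0 : 0 < s by exact: side_gt0.
have disjF : trivIset F (fun p => p.2).
  move=> [i1 Q1] [i2 Q2] /HF[/= -> [D1 _]] /HF[/= -> [D2 _]] [z [Q1z Q2z]].
  have [->//|Q12] := pselect (Q1 = Q2).
  by have : (Q1 `&` Q2) z by []; rewrite (L.2.2.1 i Q1 Q2 D1 D2 Q12).
have measF p : F p -> measurable p.2 by move=> /HF[_ [/L.1[]]].
have sub_ball : \bigcup_(p in F) p.2 `<=` eball x0 ((2 * rho + 3) * s).
  move=> z [p /HF[_ [Dp [q pq qx0]]] pz]; rewrite /eball /=.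
  apply: le_lt_trans (enorm_split z q x0) _.
  have := cube_diam_le Dp pz pq; rewrite -/s in qx0 *; lra.
have mass : (\sum_(p \in F) (C^-1 * s ^+ n)%:E <=
             (A * ((2 * rho + 3) * s) ^+ n)%:E)%E.
  apply: (@le_trans _ _ (\sum_(p \in F) mu p.2)%E).
    by apply: lee_fsum => // p /HF[_ [Dp _]]; exact: cube_mass_ge.
  rewrite -measure_fin_bigcup //; apply: le_trans (ball_mass_le x0supp _).
    apply: le_measure; rewrite ?inE; first exact: fin_bigcup_measurable.
      exact: measurable_eball.
    exact: sub_ball.
  by apply: mulr_gt0 => //; lra.
move: mass; rewrite fsumEFin // lee_fin exprMn.
have -> : \sum_(p \in F) (C^-1 * s ^+ n) = s ^+ n * (C^-1 * \sum_(p \in F) (1 : R)).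
  by rewrite mulrA mulr_fsumr; apply: eq_fsbigr => p _; rewrite mulr1 mulrC.
rewrite [_ * s ^+ n]mulrC [A * _]mulrCA ler_pM2l ?exprn_gt0 //.
by rewrite -(ler_pM2l C_gt0) mulrA mulfV ?gt_eqF // mul1r mulrA.
Qed.

End dyadic_lattice.

Definition carleson_packing (R : realType) (d : nat)
    (mu : {measure set (Rd R d) -> \bar R}) (Dl : int -> set (set (Rd R d)))
    (F : set (int * set (Rd R d))) (K : R) : Prop :=
  forall j Rc, Dl j Rc ->
    (\esum_(p in [set p : int * set (Rd R d) | F p /\ p.2 `<=` Rc]) mu p.2
      <= K%:E * mu Rc)%E.

Section carleson_transfer.
Variables (R : realType) (d n : nat) (mu : {measure set (Rd R d) -> \bar R})
  (Dl : int -> set (set (Rd R d))).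
Hypothesis L : dyadic_lattice mu n Dl.
Local Notation enorm := (@enorm R d).
Local Notation side := (side R).

Variables (C A : R) (l : nat).
Hypotheses (C_gt0 : 0 < C) (A_gt0 : 0 < A) (C_le_pow2 : C <= 2 ^+ l).
Hypothesis cube_diam_ge : forall j Q, Dl j Q -> C^-1 * side j <= ediam Q.
Hypothesis cube_mass_ge : forall j Q, Dl j Q -> ((C^-1 * side j ^+ n)%:E <= mu Q)%E.
Hypothesis cube_mass_le : forall j Q, Dl j Q -> (mu Q <= (C * side j ^+ n)%:E)%E.
Hypothesis ball_mass_le : forall x r, supp mu x -> 0 < r ->
  (mu (eball x r) <= (A * r ^+ n)%:E)%E.

Variables (m0 k0 : nat) (Bad Good : set (int * set (Rd R d)))
  (sh : int * set (Rd R d) -> int * set (Rd R d)).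
Hypothesis Bad_cube : forall a, Bad a -> Dl a.1 a.2.
Hypothesis sh_cube : forall a, Bad a -> Dl (sh a).1 (sh a).2.
Hypothesis sh_gen : forall a, Bad a -> `|(sh a).1 - (a.1 + m0%:Z)| <= k0%:Z.
Hypothesis sh_dil : forall a, Bad a -> (sh a).2 `<=` dil mu 4 a.1 a.2.
Hypothesis sh_good : forall a, Bad a -> Good (sh a).
Variable C1 : R.
Hypotheses (C1_gt0 : 0 < C1) (Good_packing : carleson_packing mu Dl Good C1).

Lemma shadow_point_near a x : Bad a -> (sh a).2 x ->
  exists2 y, a.2 y & enorm (x - y) < 4 * side a.1.
Proof.
move=> Ba /(sh_dil Ba) [_ xa]; have [_ [_ a_ne]] := L.1 _ _ (Bad_cube Ba).
apply: edist_lt a_ne xa _; have := side_gt0 R a.1; lra.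
Qed.

Lemma mass_le_shadow a : Bad a ->
  (mu a.2 <= (C * C * (2 ^+ (k0 + m0)) ^+ n)%:E * mu (sh a).2)%E.
Proof.
move=> Ba; have s_gt0 := side_gt0 R (sh a).1.
have side_a : side a.1 <= 2 ^+ (k0 + m0) * side (sh a).1.
  rewrite mulrC -ler_pdivrMr ?exprn_gt0 // -side_nat -sideD; apply: side_le.
  by have := sh_gen Ba; rewrite ler_norml PoszD; lia.
apply: le_trans (cube_mass_le (Bad_cube Ba)) _.
apply: le_trans (lee_wpmul2l _ (cube_mass_ge (sh_cube Ba))); last first.
  by rewrite lee_fin !mulr_ge0 ?exprn_ge0 // ltW.
rewrite -EFinM lee_fin.
have -> : C * C * (2 ^+ (k0 + m0)) ^+ n * (C^-1 * side (sh a).1 ^+ n) =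
          C * (2 ^+ (k0 + m0) * side (sh a).1) ^+ n.
  by rewrite exprMn; field; rewrite gt_eqF.
rewrite ler_pM2l //.
by apply: lerXn2r; rewrite ?nnegrE ?mulr_ge0 ?exprn_ge0 // ltW ?side_gt0.
Qed.

(* Bad cubes with a common shadow have generation in a window of [2 k0 + 1]
   values, and those of one generation all meet a fixed ball around a point
   of the shadow. *)
Lemma shadow_fiber_count X : finite_set X -> X `<=` Bad -> forall b,
  \sum_(a \in X `&` [set a | sh a = b]) (1 : R) <=
  (C * A * 11 ^+ n) *+ (2 * k0 + 1).
Proof.
move=> finX XBad b; set Fb := X `&` _.
have finFb : finite_set Fb by exact: sub_finite_set (@subIsetl _ _ _) finX.
have [[a0 [Xa0 /= a0b]]|Fb0] := pselect (Fb !=set0); last first.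
  rewrite (_ : Fb = set0) ?fsbig_set0 ?mulrn_wge0 ?mulr_ge0 ?exprn_ge0 ?ltW //.
  by apply/seteqP; split => // a Fba; apply: Fb0; exists a.
have [_ [b_supp [x0 bx0]]] := L.1 _ _ (sh_cube (XBad _ Xa0)).
rewrite a0b in b_supp bx0.
pose t (a : int * set (Rd R d)) := absz (a.1 - (b.1 - m0%:Z) + k0%:Z).
have Fb_t a : Fb a -> `I_(2 * k0 + 1) (t a).
  by move=> [/XBad/sh_gen + /= ab]; rewrite ab ler_norml /t /=; lia.
have finI := finite_II (2 * k0 + 1).
rewrite (@fsbig_fibers _ _ _ _ _ _ _ t _ finFb finI Fb_t).
apply: (@le_trans _ _ (\sum_(k \in `I_(2 * k0 + 1)) C * A * 11 ^+ n)); last first.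
  by rewrite -(fsbig_ord _ _ (fun=> C * A * 11 ^+ n)) sumr_const card_ord.
rewrite -lee_fin -!fsumEFin //; apply: lee_fsum => // k _.
rewrite lee_fin (_ : 11 = 2 * 4 + 3 :> R); last by lra.
apply: (count_cubes_near L C_gt0 cube_mass_ge ball_mass_le
         (i := b.1 - m0%:Z - k0%:Z + k%:Z) (x0 := x0)) => //.
- exact: sub_finite_set (@subIsetl _ _ _) finFb.
- exact: b_supp.
- move=> a [[Xa /= ab] /= ta]; have Ba := XBad _ Xa.
  have a1 : a.1 = b.1 - m0%:Z - k0%:Z + k%:Z.
    by move: (sh_gen Ba) ta; rewrite ab ler_norml /t; lia.
  split => //; rewrite -a1; split; first exact: Bad_cube.
  have shx0 : (sh a).2 x0 by rewrite ab.
  have [y ay xy] := shadow_point_near Ba shx0.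
  by exists y => //; rewrite enormB ltW.
Qed.

Lemma bad_side_le j Rc a : Dl j Rc -> Bad a -> a.2 `<=` Rc ->
  side a.1 <= C * side j.
Proof.
move=> DR Ba aR; rewrite -ler_pdivrMl //.
exact: (cube_side_le_sub L cube_diam_ge (Bad_cube Ba) DR aR).
Qed.

Lemma shadow_gen_ge j Rc a : Dl j Rc -> Bad a -> a.2 `<=` Rc ->
  j - (l + k0)%:Z <= (sh a).1.
Proof.
move=> DR Ba aR; have a_ge : j - l%:Z <= a.1.
  rewrite leNgt; apply/negP => /(side_lt R) lt_side.
  have := lt_le_trans lt_side (bad_side_le DR Ba aR).
  by rewrite sideD side_Nnat mulrC ltr_pM2r ?side_gt0 // ltNge C_le_pow2.
by have := sh_gen Ba; rewrite ler_norml PoszD; lia.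
Qed.

Lemma shadow_point_close j Rc r0 a x : Dl j Rc -> Rc r0 -> Bad a -> a.2 `<=` Rc ->
  (sh a).2 x -> enorm (x - r0) <= 2 * (4 * C + 1) * side j.
Proof.
move=> DR Rr0 Ba aR shx; have [y ay xy] := shadow_point_near Ba shx.
have := bad_side_le DR Ba aR; have := cube_diam_le L DR (aR _ ay) Rr0.
have := enorm_split x y r0; lra.
Qed.

Lemma good_mass_in_cube_le j Q Y : Dl j Q -> finite_set Y ->
    (forall b, Y b -> Good b /\ b.2 `<=` Q) ->
  (\sum_(b \in Y) mu b.2 <= (C1 * C * side j ^+ n)%:E)%E.
Proof.
move=> DQ finY YGood; apply: le_trans (_ : C1%:E * mu Q <= _)%E; last first.
  rewrite -mulrA EFinM; apply: lee_wpmul2l; first by rewrite lee_fin ltW.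
  exact: cube_mass_le.
by apply: le_trans (Good_packing DQ); apply: esum_ge; exists Y.
Qed.

(* Each shadow lies in an ancestor of generation [j - (l + k0)]; these
   ancestors carry Carleson mass at most [C1 * mu], and there are boundedly many
   of them since they all meet a fixed ball around a point of [Rc]. *)
Lemma shadow_image_mass_le j Rc X : Dl j Rc -> finite_set X ->
  X `<=` [set a | Bad a /\ a.2 `<=` Rc] ->
  (\sum_(b \in sh @` X) mu b.2 <= (C1 * C * side (j - (l + k0)%:Z) ^+ n *
     (C * A * (2 * (2 * (4 * C + 1)) + 3) ^+ n))%:E)%E.
Proof.
move=> DR finX XBad; set j' := j - (l + k0)%:Z; set Y := sh @` X.
have finY : finite_set Y by exact: finite_image.
have [_ [Rc_supp [r0 Rr0]]] := L.1 _ _ DR.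
have [anc anc_spec] : {anc : int * set (Rd R d) -> set (Rd R d) &
    forall b, Y b -> Dl j' (anc b) /\ b.2 `<=` anc b}.
  apply: (@choice _ _ (fun b Q => Y b -> Dl j' Q /\ b.2 `<=` Q)) => b.
  have [[a /XBad[Ba aR] <-]|Yb] := pselect (Y b); last by exists set0.
  have [Q DQ shQ] := cube_ancestor L (shadow_gen_ge DR Ba aR) (sh_cube Ba).
  by exists Q.
pose anc' b := (j', anc b).
have finA : finite_set (anc' @` Y) by exact: finite_image.
rewrite (@fsbig_fibers _ _ _ _ _ _ (anc' @` Y) anc' _ finY finA);
  last by move=> b Yb; exists b.
apply: (@le_trans _ _ (\sum_(z \in anc' @` Y) (C1 * C * side j' ^+ n)%:E)%E).
  apply: lee_fsum => // _ [b0 Yb0 <-]; have [Danc _] := anc_spec _ Yb0.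
  apply: good_mass_in_cube_le Danc _ _.
    exact: sub_finite_set (@subIsetl _ _ _) finY.
  move=> b [Yb /= [anc_b]]; split.
    by case: Yb => a /XBad[Ba _] <-; exact: sh_good.
  by rewrite -anc_b; have [] := anc_spec _ Yb.
rewrite fsumEFin // lee_fin.
have -> : \sum_(z \in anc' @` Y) (C1 * C * side j' ^+ n) =
          C1 * C * side j' ^+ n * \sum_(z \in anc' @` Y) (1 : R).
  by rewrite mulr_fsumr; apply: eq_fsbigr => z _; rewrite mulr1.
rewrite ler_pM2l ?mulr_gt0 ?exprn_gt0 ?side_gt0 //.
apply: (count_cubes_near L C_gt0 cube_mass_ge ball_mass_le (i := j') (x0 := r0))
  => //.
- exact: Rc_supp.
- by rewrite !mulr_ge0 ?addr_ge0 ?mulr_ge0 ?ltW.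
move=> _ [b Yb <-]; have [Danc b_anc] := anc_spec _ Yb; split => //; split => //.
case: Yb b_anc => a /XBad[Ba aR] <- sh_anc.
have [_ [_ [x shx]]] := L.1 _ _ (sh_cube Ba).
exists x; first exact: sh_anc.
apply: le_trans (shadow_point_close DR Rr0 Ba aR shx) _.
apply: ler_wpM2l; first by rewrite !mulr_ge0 ?addr_ge0 ?mulr_ge0 ?ltW.
by apply: side_le; rewrite /j' lerBlDr lerDl.
Qed.

Lemma carleson_packing_of_shadows :
  exists K, 0 < K /\ carleson_packing mu Dl Bad K.
Proof.
set K1 := C * C * (2 ^+ (k0 + m0)) ^+ n.
set M := (C * A * 11 ^+ n) *+ (2 * k0 + 1).
set N := C * A * (2 * (2 * (4 * C + 1)) + 3) ^+ n.
set E := (2 : R) ^+ (l + k0).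
have K1_gt0 : 0 < K1 by rewrite /K1 !mulr_gt0 ?exprn_gt0.
have M_gt0 : 0 < M by rewrite /M -mulr_natr !mulr_gt0 ?exprn_gt0 ?ltr0n ?addn1.
have K_gt0 : 0 < K1 * M * (C1 * C * E ^+ n * N) * C.
  by rewrite !mulr_gt0 ?exprn_gt0 //; move: C_gt0; lra.
exists (K1 * M * (C1 * C * E ^+ n * N) * C); split; first exact: K_gt0.
move=> j Rc DR; apply: ge_ereal_sup => _ [X [finX XBad] <-].
have XB : X `<=` Bad by move=> a /XBad[].
apply: (@le_trans _ _ (\sum_(a \in X) K1%:E * mu (sh a).2)%E).
  by apply: lee_fsum => // a /XB; exact: mass_le_shadow.
rewrite -ge0_mule_fsumr //.
apply: le_trans (lee_wpmul2l _ (fsume_fiber_le (f := fun b => mu b.2) finX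
  (fun b => measure_ge0 mu b.2) (shadow_fiber_count finX XB))) _.
  by rewrite lee_fin ltW.
rewrite muleA -EFinM.
apply: le_trans (lee_wpmul2l _ (shadow_image_mass_le DR finX XBad)) _.
  by rewrite lee_fin ltW ?mulr_gt0.
apply: le_trans (lee_wpmul2l _ (cube_mass_ge DR)); last by rewrite lee_fin ltW.
rewrite -!EFinM lee_fin le_eqVlt; apply/predU1l.
by rewrite sideD side_Nnat -/E /M /N /K1 exprMn; field; rewrite gt_eqF.
Qed.

End carleson_transfer.

Lemma carleson_packing_transfer (R : realType) (d n : nat)
    (mu : {measure set (Rd R d) -> \bar R}) (Dl : int -> set (set (Rd R d)))
    (m0 k0 : nat) (Bad Good : set (int * set (Rd R d))) (C1 : R) :
  AD_regular mu n -> dyadic_lattice mu n Dl ->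
  0 < C1 -> carleson_packing mu Dl Good C1 ->
  (forall a, Bad a -> Dl a.1 a.2 /\ exists b, [/\ Good b, Dl b.1 b.2,
     `|b.1 - (a.1 + m0%:Z)| <= k0%:Z & b.2 `<=` dil mu 4 a.1 a.2]) ->
  exists K, 0 < K /\ carleson_packing mu Dl Bad K.
Proof.
move=> [A [A_gt0 ball_mass]] L C1_gt0 Good_packing Bad_sh.
have [_ [_ [_ [_ [[C [C_gt0 cube_size]] _]]]]] := L.
have [l C_le_pow2] : exists l : nat, C <= 2 ^+ l.
  exists (Num.bound C); apply/ltW/(lt_le_trans (archi_boundP (ltW C_gt0))).
  by rewrite -natrX ler_nat; apply/ltnW; exact: ltn_expl.
have [sh sh_spec] : {sh : int * set (Rd R d) -> int * set (Rd R d) &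
    forall a, Bad a -> [/\ Good (sh a), Dl (sh a).1 (sh a).2,
      `|(sh a).1 - (a.1 + m0%:Z)| <= k0%:Z & (sh a).2 `<=` dil mu 4 a.1 a.2]}.
  apply: (@choice _ _ (fun a b => Bad a -> [/\ Good b, Dl b.1 b.2,
      `|b.1 - (a.1 + m0%:Z)| <= k0%:Z & b.2 `<=` dil mu 4 a.1 a.2])) => a.
  have [/Bad_sh[_ [b sh_b]]|nBa] := pselect (Bad a); first by exists b.
  by exists a => /nBa.
apply: (carleson_packing_of_shadows (m0 := m0) (k0 := k0) (sh := sh)
  L C_gt0 A_gt0 C_le_pow2 _ _ _ _ _ _ _ _ _ C1_gt0 Good_packing).
- by move=> j Q /cube_size[].
- by move=> j Q /cube_size[_ [_ []]].
- by move=> j Q /cube_size[_ [_ []]].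
- by move=> x r /ball_mass /[apply] -[].
- by move=> a /Bad_sh[].
- by move=> a /sh_spec[].
- by move=> a /sh_spec[_ _ + _].
- by move=> a /sh_spec[_ _ _ +].
- by move=> a /sh_spec[+ _ _ _].
Qed.

Theorem lemma6p7 (R : realType) (d n : nat)
  (mu : {measure set (Rd R d) -> \bar R})
  (Dl : int -> set (set (Rd R d))) (phi : R -> R)
  (eps0 delta0 : R) (m0 k0 : nat) :
  AD_regular mu n ->
  ~ ebounded (supp mu) ->
  dyadic_lattice mu n Dl ->
  admissible_phi phi ->
  0 < eps0 -> 0 < delta0 ->
  (forall (i : int) (Q : set (Rd R d)), Dl i Q ->
     (eps0%:E < beta1 mu n i Q)%E ->
     exists k : int, `|k| <= k0%:Z /\
       exists P : set (Rd R d), Dl (i + k + m0%:Z) P /\ P `<=` dil mu 4 i Q /\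
         forall x, P x -> delta0 <= enorm (Sm mu n phi (i + k) x)) ->
  forall C1 : R, 0 < C1 ->
  (forall (j : int) (Rc : set (Rd R d)), Dl j Rc ->
     (\esum_(p in [set p : int * set (Rd R d) |
                   (exists k : int, p.1 = (k + m0%:Z)%R /\ Dl p.1 p.2 /\
                      forall x, p.2 x -> (delta0 <= enorm (Sm mu n phi k x))%R)
                   /\ p.2 `<=` Rc]) mu p.2
      <= C1%:E * mu Rc)%E) ->
  exists C2 : R, 0 < C2 /\
  forall (j : int) (Rc : set (Rd R d)), Dl j Rc ->
     (\esum_(p in [set p : int * set (Rd R d) |
                   (Dl p.1 p.2 /\ (eps0%:E < beta1 mu n p.1 p.2)%E)
                   /\ p.2 `<=` Rc]) mu p.2
      <= C2%:E * mu Rc)%E.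
Proof.
move=> AD _ L _ _ _ bad_near C1 C1_gt0 Good_packing.
apply: (carleson_packing_transfer (m0 := m0) (k0 := k0) AD L C1_gt0 Good_packing).
move=> [i Q] /= [DQ beta_gt]; split => //.
have [k [k_le [P [DP [PQ S_ge]]]]] := bad_near i Q DQ beta_gt.
exists (i + k + m0%:Z, P); split => //=; first by exists (i + k).
by rewrite (_ : _ - _ = k) //; ring.
Qed.
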